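(* Let $\varphi:(0,1]\to(0,\infty)$ be differentiable with $\int_0^1\frac{ds}{\varphi(s)}<\infty$ and \[ \frac{\varphi'(s)}{\varphi(s)}\le\frac{2}{s}\quad\text{for all } s\in(0,1). \] Define, for $A\in[0,1]$ and $N\in[0,1]$, \[ T(A,N)=N\int_0^{N/(A+1)}\frac{ds}{\varphi(s)}. \] Then $T$ is a convex function of $(A,N)$ on $[0,1]\times[0,1]$. *)

From HB Require Import structures.
From mathcomp Require Import all_boot all_order all_algebra.
From mathcomp Require Import all_classical all_reals all_analysis.
Set Implicit Arguments. Unset Strict Implicit. Unset Printing Implicit Defensive.
Import Order.TTheory GRing.Theory Num.Theory.
Import numFieldNormedType.Exports.
Local Open Scope classical_set_scope.
Local Open Scope ring_scope.

Definition inv_int (R : realType) (phi : R -> R) (x : R) : \bar R :=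
  (\int[@lebesgue_measure R]_(s in `]0%R, x]) ((phi s)^-1)%:E)%E.

Definition Tfun (R : realType) (phi : R -> R) (A N : R) : R :=
  N * fine (inv_int phi (N / (A + 1))).

From HB Require Import structures.
From mathcomp Require Import all_boot all_order all_algebra.
From mathcomp Require Import all_classical all_reals all_analysis.
From mathcomp Require Import measurable_realfun ring lra.
Import Order.TTheory GRing.Theory Num.Theory.
Import numFieldNormedType.Exports.
Local Open Scope classical_set_scope.
Local Open Scope ring_scope.
Set Implicit Arguments. Unset Strict Implicit. Unset Printing Implicit Defensive.

(* Write F x for the integral of 1/phi over ]0, x] and H x := x * F x.  Then
   T(A, N) = v * H (N / v) with v = A + 1: T is the perspective of H, so it is
   enough that H be convex on [0, 1].  The hypothesis phi'/phi <= 2/s says that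
   phi s / s^2 is nonincreasing, i.e. 1/phi s lies below (y^2/phi y)/s^2 for
   s <= y and above it for s >= y.  Integrating these comparisons bounds the
   increments of F on both sides of y, and the bounds say exactly that
   F y + y / phi y is a supporting slope of H at y. *)

Section real_functions.
Variable R : realType.
Implicit Types (f : R -> R) (a b c x : R).

Lemma is_derive1_continuous f x df :
  is_derive x 1 f df -> {for x, continuous f}.
Proof. by move=> [/derivable1_diffP/differentiable_continuous]. Qed.

Lemma left_continuous_of_left_derivative f a :
  cvg ((fun h => h^-1 * (f (h + a) - f a)) @ 0^'-) ->
  f x @[x --> a^'-] --> f a.
Proof.
move=> df.
have f_shift : f (h + a) @[h --> 0^'-] --> f a.
  have : (f a + h * (h^-1 * (f (h + a) - f a))) @[h --> 0^'-] --> f a + 0 * lim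
      ((fun h => h^-1 * (f (h + a) - f a)) @ 0^'-).
    apply: cvgD; first exact: cvg_cst.
    by apply: cvgM => //; exact: cvg_at_left_filter cvg_id.
  rewrite mul0r addr0; apply: cvg_trans; apply: near_eq_cvg.
  near=> h; have h0 : h != 0 by near: h; exact: nbhs_left_neq.
  by rewrite mulrA mulfV // mul1r addrC subrK.
apply/cvg_at_leftP => u [ua u_a].
suff : f (u n - a + a) @[n --> \oo] --> f a by under eq_fun do rewrite subrK.
apply: (cvg_at_leftP (fun h => f (h + a)) 0 (f a)).1 f_shift (fun n => u n - a) _.
split; first by move=> n; rewrite subr_lt0.
by rewrite -(subrr a); apply: cvgB => //; exact: cvg_cst.
Unshelve. all: by end_near. Qed.

Lemma is_derive_inv_sqr x : x != 0 ->
  is_derive x 1 (fun s : R => (s ^+ 2)^-1) (- (x ^+ 2)^-2 * (2 * x)).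
Proof.
move=> x0; have Dsqr : is_derive x 1 (fun s : R => s ^+ 2) (2 * x).
  have := @is_deriveX R R id 2 x 1 1 (is_derive_id x 1).
  have -> : (fun s : R => s ^+ 2) = @id R ^+ 2 by apply/funext => s.
  by move=> D; apply: (is_derive_eq D); rewrite expr1; exact: mulr1.
by apply: is_deriveV; rewrite expf_neq0.
Qed.

Lemma is_derive_scale_inv c x : x != 0 ->
  is_derive x 1 (fun s : R => - c * s^-1) (c * (x ^+ 2)^-1).
Proof.
move=> x0; have D : is_derive x 1 (fun s : R => - c * s^-1)
    (- c *: (- (x ^- 2) *: 1)) by exact/is_deriveZ/is_deriveV.
by apply: (is_derive_eq D); rewrite /GRing.scale /=; field.
Qed.

Lemma measurable_fun_itv_oc_continuous f a b :
  {in `]a, b[, continuous f} -> measurable_fun `]a, b] (EFin \o f).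
Proof.
move=> cf; apply/measurable_EFinP/measurable_fun_itv_bndo_bndcP.
apply: subspace_continuous_measurable_fun => //.
by rewrite continuous_open_subspace // => x; rewrite inE => /cf.
Qed.

Lemma continuous_scale_inv_sqr c x : x != 0 ->
  {for x, continuous (fun s : R => c * (s ^+ 2)^-1)}.
Proof.
move=> x0; apply: cvgM; first exact: cvg_cst.
by have := is_derive1_continuous (is_derive_inv_sqr x0).
Qed.

Lemma measurable_scale_inv_sqr c a b : 0 < a ->
  measurable_fun `]a, b] (fun s : R => (c * (s ^+ 2)^-1)%:E).
Proof.
move=> a0; apply: measurable_fun_itv_oc_continuous => x.
rewrite in_itv /= => /andP[ax _].
by apply: continuous_scale_inv_sqr; rewrite gt_eqF // (lt_trans a0).
Qed.

Lemma integral_scale_inv_sqr c a b : 0 < a -> a <= b ->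
  (\int[lebesgue_measure]_(s in `]a, b]) (c * (s ^+ 2)^-1)%:E
    = (c * (a^-1 - b^-1))%:E)%E.
Proof.
move=> a0; rewrite le_eqVlt => /predU1P[<-|ab].
  by rewrite set_itv_ge ?integral_set0 ?subrr ?mulr0 // bnd_simp ltxx.
have nz x : a <= x -> x != 0 by move=> ax; rewrite gt_eqF // (lt_le_trans a0).
have cf x : a <= x -> {for x, continuous (fun s : R => c * (s ^+ 2)^-1)}.
  by move/nz; exact: continuous_scale_inv_sqr.
have cF x : a <= x -> {for x, continuous (fun s : R => - c * s^-1)}.
  by move=> /nz/(is_derive_scale_inv c)/is_derive1_continuous.
rewrite integral_itv_obnd_cbnd; last exact: measurable_scale_inv_sqr.
rewrite (@continuous_FTC2 R _ (fun s : R => - c * s^-1)) //.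
- by rewrite -EFinB; congr (_%:E); ring.
- apply/continuous_within_itvP => //; split.
  + by move=> x; rewrite in_itv /= => /andP[/ltW/cf].
  + exact/cvg_at_right_filter/cf.
  + exact/cvg_at_left_filter/cf/ltW.
- split.
  + move=> x; rewrite in_itv /= => /andP[/ltW/nz x0 _].
    by have [] := is_derive_scale_inv c x0.
  + exact/cvg_at_right_filter/cF.
  + exact/cvg_at_left_filter/cF/ltW.
- move=> x; rewrite in_itv /= => /andP[/ltW/nz x0 _].
  by rewrite derive1E; have [_ ->] := is_derive_scale_inv c x0.
Qed.

End real_functions.

Definition convex_on (R : realFieldType) (I : interval R) (H : R -> R) :=
  {in I &, forall x z l, 0 <= l <= 1 ->
    H (l * x + (1 - l) * z) <= l * H x + (1 - l) * H z}.

Section convexity.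
Variables (R : realFieldType) (I : interval R).
Implicit Types (H : R -> R).

Lemma convex_on_supporting_slopes H :
  (forall x y z, x \in I -> z \in I -> x <= y <= z ->
    exists D, H y - H x <= (y - x) * D /\ (z - y) * D <= H z - H y) ->
  convex_on I H.
Proof.
move=> slope; suff convex_ord x z l : x \in I -> z \in I -> x <= z ->
    0 <= l <= 1 -> H (l * x + (1 - l) * z) <= l * H x + (1 - l) * H z.
  move=> x z xI zI l l01; have [xz|zx] := leP x z; first exact: convex_ord.
  have l01' : 0 <= 1 - l <= 1 by move: l01 => /andP[? ?]; apply/andP; lra.
  have := convex_ord z x (1 - l) zI xI (ltW zx) l01'; rewrite subKr.
  by rewrite (addrC (l * x)) (addrC (l * H x)).
move=> xI zI xz /andP[l0 l1]; set y := l * x + (1 - l) * z.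
have xyz : x <= y <= z by rewrite /y; apply/andP; split; nra.
have [D [Dx Dz]] := slope x y z xI zI xyz.
have balance : l * ((y - x) * D) = (1 - l) * ((z - y) * D) by rewrite /y; ring.
have : l * (H y - H x) <= (1 - l) * (H z - H y).
  apply: le_trans (ler_wpM2l l0 Dx) _; rewrite balance.
  by apply: ler_wpM2l; rewrite ?subr_ge0.
lra.
Qed.

Lemma convex_on_perspective H v1 v2 N1 N2 t :
  convex_on I H -> 0 < v1 -> 0 < v2 -> N1 / v1 \in I -> N2 / v2 \in I ->
  0 <= t <= 1 ->
  (t * v1 + (1 - t) * v2) * H ((t * N1 + (1 - t) * N2) / (t * v1 + (1 - t) * v2))
    <= t * (v1 * H (N1 / v1)) + (1 - t) * (v2 * H (N2 / v2)).
Proof.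
move=> cvxH v1_gt0 v2_gt0 x1I x2I /andP[t0 t1].
set v := t * v1 + (1 - t) * v2.
have v_gt0 : 0 < v by rewrite /v; nra.
set l := t * v1 / v.
have l01 : 0 <= l <= 1.
  apply/andP; split; first by rewrite divr_ge0 ?mulr_ge0 // ltW.
  by rewrite ler_pdivrMr // mul1r /v; nra.
have -> : (t * N1 + (1 - t) * N2) / v = l * (N1 / v1) + (1 - l) * (N2 / v2).
  by rewrite /l /v; field; rewrite !gt_eqF.
rewrite [leRHS](_ : _ = v * (l * H (N1 / v1) + (1 - l) * H (N2 / v2))); last first.
  by rewrite /l /v; field; rewrite gt_eqF.
by apply: ler_wpM2l; [exact: ltW | exact: cvxH].
Qed.

End convexity.

(* [fine] sends +oo to 0; [inv_int_fin_num] below rules this out on [0, 1]. *)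
Definition inv_intR (R : realType) (phi : R -> R) (x : R) : R :=
  fine (inv_int phi x).

Section inv_phi.
Variables (R : realType) (phi : R -> R).
Hypothesis phi_pos : forall s : R, 0 < s <= 1 -> 0 < phi s.
Hypothesis phi_der : forall s : R, 0 < s < 1 -> derivable phi s 1.
Hypothesis phi_der1 : cvg ((fun h : R => h^-1 * (phi (h + 1) - phi 1)) @ 0^'-).
Hypothesis phi_int : (inv_int phi 1 < +oo)%E.
Hypothesis phi_log : forall s : R, 0 < s < 1 -> derive1 phi s / phi s <= 2 / s.

Implicit Types (a b s x y z : R).

Let F := inv_intR phi.

Lemma continuous_inv_phi x : 0 < x < 1 -> {for x, continuous (fun s => (phi s)^-1)}.
Proof.
move=> /andP[x0 x1]; have phix : phi x != 0 by rewrite gt_eqF // phi_pos // x0 ltW.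
apply: is_derive1_continuous (is_deriveV phix (derivableP (phi_der _))).
by rewrite x0.
Qed.

Lemma measurable_inv_phi a b : 0 <= a -> b <= 1 ->
  measurable_fun `]a, b] (fun s => ((phi s)^-1)%:E).
Proof.
move=> a0 b1; apply: (measurable_funS (E := (`]0, 1] : set R))) => //.
  move=> s /=; rewrite !in_itv /= => /andP[a_s s_b].
  by rewrite (le_lt_trans a0 a_s) (le_trans s_b b1).
apply: measurable_fun_itv_oc_continuous => x.
by rewrite in_itv /=; exact: continuous_inv_phi.
Qed.

Lemma inv_phi_ge0 a b : 0 <= a -> b <= 1 ->
  forall s, `]a, b]%classic s -> (0 <= ((phi s)^-1)%:E)%E.
Proof.
move=> a0 b1 s; rewrite /= in_itv /= => /andP[a_s s_b].
by rewrite lee_fin invr_ge0 ltW // phi_pos // (le_lt_trans a0 a_s) (le_trans s_b b1).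
Qed.

Lemma phi_over_sqr_nonincreasing a b : 0 < a -> a <= b -> b <= 1 ->
  phi b / b ^+ 2 <= phi a / a ^+ 2.
Proof.
move=> a0 ab b1; have [a1|a1] := eqVneq a 1.
  by have -> : b = a by apply/le_anti; rewrite ab a1 b1.
have {}a1 : a < 1 by rewrite lt_neqAle a1 (le_trans ab b1).
set g := fun s => phi s / s ^+ 2.
have g_der x : 0 < x < 1 -> is_derive x 1 g
    (phi x * (- (x ^+ 2)^-2 * (2 * x)) + (x ^+ 2)^-1 * derive1 phi x).
  move=> x01; have /andP[x0 _] := x01.
  apply: is_deriveM; last exact: is_derive_inv_sqr (lt0r_neq0 x0).
  by rewrite derive1E; exact/derivableP/phi_der.
have in_01 x : x \in `]a, 1[ -> 0 < x < 1.
  by rewrite in_itv /= => /andP[ax ->]; rewrite (lt_trans a0).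
apply: (@ler0_derive1_le_cc R g a 1); last 3 first.
- by rewrite in_itv /= ab b1.
- by rewrite in_itv /= lexx ltW.
- exact: ab.
- by move=> x /in_01/g_der [].
- move=> x /in_01 x01; have /andP[x0 x1] := x01.
  rewrite derive1E; have [_ ->] := g_der x x01.
  have phix : 0 < phi x by rewrite phi_pos // x0 ltW.
  have : derive1 phi x <= 2 * phi x / x.
    by have := phi_log x01; rewrite ler_pdivrMr // mulrAC.
  have -> : phi x * (- (x ^+ 2)^-2 * (2 * x)) + (x ^+ 2)^-1 * derive1 phi x
      = (x ^+ 2)^-1 * (derive1 phi x - 2 * phi x / x) by field; rewrite gt_eqF.
  by rewrite -subr_le0; apply: mulr_ge0_le0; rewrite invr_ge0 exprn_ge0 // ltW.
- have g_cont x : 0 < x < 1 -> {for x, continuous g}.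
    by move/g_der; exact: is_derive1_continuous.
  apply/continuous_within_itvP => //; split.
  + by move=> x /in_01; exact: g_cont.
  + by apply/cvg_at_right_filter/g_cont; rewrite a0.
  + apply: cvgM; first exact: left_continuous_of_left_derivative.
    apply: cvg_at_left_filter.
    by have := is_derive1_continuous (is_derive_inv_sqr (oner_neq0 R)).
Qed.

Lemma inv_int_fin_num x : 0 <= x <= 1 -> inv_int phi x \is a fin_num.
Proof.
move=> /andP[x0 x1].
rewrite ge0_fin_numE; last by apply: integral_ge0; exact: inv_phi_ge0.
apply: le_lt_trans phi_int; apply: ge0_subset_integral => //.
- exact: measurable_inv_phi.
- exact: inv_phi_ge0.
- by move=> s /=; rewrite !in_itv /= => /andP[-> /le_trans->].
Qed.

Lemma inv_intR_ge0 x : 0 <= x <= 1 -> 0 <= F x.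
Proof.
move=> x01; have /andP[x0 x1] := x01.
by rewrite -lee_fin fineK ?inv_int_fin_num //; apply: integral_ge0; exact: inv_phi_ge0.
Qed.

Lemma inv_intR_sub x y : 0 <= x -> x <= y -> y <= 1 ->
  ((F y - F x)%:E = \int[lebesgue_measure]_(s in `]x, y]) ((phi s)^-1)%:E)%E.
Proof.
move=> x0 xy y1; have y0 := le_trans x0 xy; have x1 := le_trans xy y1.
have split_itv := @itv_bndbnd_setU _ R (BRight 0) (BRight x) (BRight y).
rewrite EFinB !fineK ?inv_int_fin_num ?x0 ?x1 ?y0 ?y1 //.
rewrite /inv_int split_itv ?bnd_simp // ge0_integral_setU //.
- rewrite [X in (X - _)%E]addeC addeK //.
  by rewrite -/(inv_int phi x) inv_int_fin_num // x0.
- by rewrite -split_itv ?bnd_simp //; exact: measurable_inv_phi.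
- by rewrite -split_itv ?bnd_simp //; exact: inv_phi_ge0.
- rewrite disj_set2E; apply/eqP/seteqP; split => s //=.
  by rewrite !in_itv /= => -[/andP[_ sx] /andP[/lt_le_trans/(_ sx)]]; rewrite ltxx.
Qed.

Lemma inv_phi_le_sqr s y : 0 < s -> s <= y -> y <= 1 ->
  (phi s)^-1 <= y ^+ 2 / phi y / s ^+ 2.
Proof.
move=> s0 sy y1; have y0 := lt_le_trans s0 sy.
have phis : 0 < phi s by rewrite phi_pos // s0 (le_trans sy).
have phiy : 0 < phi y by rewrite phi_pos // y0.
have -> : (phi s)^-1 = (phi s / s ^+ 2)^-1 / s ^+ 2 by field; rewrite !gt_eqF.
have -> : y ^+ 2 / phi y / s ^+ 2 = (phi y / y ^+ 2)^-1 / s ^+ 2.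
  by field; rewrite !gt_eqF.
rewrite ler_pM2r ?invr_gt0 ?exprn_gt0 //.
rewrite lef_pV2 ?posrE ?divr_gt0 ?exprn_gt0 //.
exact: phi_over_sqr_nonincreasing.
Qed.

Lemma inv_phi_ge_sqr y s : 0 < y -> y <= s -> s <= 1 ->
  y ^+ 2 / phi y / s ^+ 2 <= (phi s)^-1.
Proof.
move=> y0 ys s1; have s0 := lt_le_trans y0 ys.
have phis : 0 < phi s by rewrite phi_pos // s0.
have phiy : 0 < phi y by rewrite phi_pos // y0 (le_trans ys).
have -> : (phi s)^-1 = (phi s / s ^+ 2)^-1 / s ^+ 2 by field; rewrite !gt_eqF.
have -> : y ^+ 2 / phi y / s ^+ 2 = (phi y / y ^+ 2)^-1 / s ^+ 2.
  by field; rewrite !gt_eqF.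
rewrite ler_pM2r ?invr_gt0 ?exprn_gt0 //.
rewrite lef_pV2 ?posrE ?divr_gt0 ?exprn_gt0 //.
exact: phi_over_sqr_nonincreasing.
Qed.

Lemma inv_intR_sub_le x y : 0 < x -> x <= y -> y <= 1 ->
  F y - F x <= y ^+ 2 / phi y * (x^-1 - y^-1).
Proof.
move=> x0 xy y1; rewrite -lee_fin (inv_intR_sub (ltW x0)) //.
rewrite -integral_scale_inv_sqr //; apply: ge0_le_integral => //.
- exact: inv_phi_ge0 (ltW x0) y1.
- exact: measurable_inv_phi (ltW x0) y1.
- exact: measurable_scale_inv_sqr.
- move=> s; rewrite /= in_itv /= => /andP[xs sy].
  by rewrite lee_fin inv_phi_le_sqr // (lt_trans x0).
Qed.

Lemma inv_intR_sub_ge y z : 0 < y -> y <= z -> z <= 1 ->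
  y ^+ 2 / phi y * (y^-1 - z^-1) <= F z - F y.
Proof.
move=> y0 yz z1; rewrite -lee_fin (inv_intR_sub (ltW y0)) //.
rewrite -integral_scale_inv_sqr //; apply: ge0_le_integral => //.
- have phiy : 0 < phi y by rewrite phi_pos // y0 (le_trans yz z1).
  by move=> s _; rewrite lee_fin !divr_ge0 ?sqr_ge0 ?(ltW phiy).
- exact: measurable_scale_inv_sqr.
- exact: measurable_inv_phi (ltW y0) z1.
- move=> s; rewrite /= in_itv /= => /andP[ys sz].
  by rewrite lee_fin inv_phi_ge_sqr // ?(ltW ys) ?(le_trans sz z1).
Qed.

Lemma mul_inv_intR_supporting_slope x y z : 0 <= x -> x <= y <= z -> z <= 1 ->
  exists D, y * F y - x * F x <= (y - x) * D /\ (z - y) * D <= z * F z - y * F y.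
Proof.
move=> x0 /andP[xy yz] z1; have y1 := le_trans yz z1.
have z0 := le_trans x0 (le_trans xy yz).
have [y_le0|y0] := leP y 0.
  have y_eq0 : y = 0 by apply/le_anti; rewrite y_le0 (le_trans x0 xy).
  have x_eq0 : x = 0 by apply/le_anti; rewrite x0 -y_eq0 xy.
  exists 0; rewrite x_eq0 y_eq0 !mul0r !mulr0 subrr subr0 lexx; split => //.
  by rewrite mulr_ge0 // inv_intR_ge0 // z0 z1.
have phiy : 0 < phi y by rewrite phi_pos // y0.
exists (F y + y / phi y); split.
- have [x_gt0|x_le0] := ltP 0 x.
    have := ler_wpM2l x0 (inv_intR_sub_le x_gt0 xy y1).
    have -> : x * (y ^+ 2 / phi y * (x^-1 - y^-1)) = (y - x) * (y / phi y).
      by field; rewrite !gt_eqF.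
    lra.
  have -> : x = 0 by apply/le_anti; rewrite x_le0 x0.
  by rewrite !mul0r !subr0 mulrDr lerDl !mulr_ge0 ?invr_ge0 // ltW.
- have := ler_wpM2l z0 (inv_intR_sub_ge y0 yz z1).
  have -> : z * (y ^+ 2 / phi y * (y^-1 - z^-1)) = (z - y) * (y / phi y).
    by field; rewrite !gt_eqF // (lt_le_trans y0 yz).
  lra.
Qed.

Lemma mul_inv_intR_convex : convex_on `[0, 1] (fun x => x * F x).
Proof.
apply: convex_on_supporting_slopes => x y z.
rewrite !in_itv /= => /andP[x0 _] /andP[_ z1] xyz.
exact: mul_inv_intR_supporting_slope x0 xyz z1.
Qed.

End inv_phi.

Lemma Tfun_perspective (R : realType) (phi : R -> R) (A N : R) : A + 1 != 0 ->
  Tfun phi A N = (A + 1) * (N / (A + 1) * inv_intR phi (N / (A + 1))).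
Proof. by move=> A1; rewrite /Tfun -/(inv_intR _ _); field. Qed.

Unset Implicit Arguments. Set Strict Implicit.

Theorem mainTheorem6 (R : realType) (phi : R -> R)
  (phi_pos : forall s : R, 0 < s <= 1 -> 0 < phi s)
  (phi_der : forall s : R, 0 < s < 1 -> derivable phi s 1)
  (phi_der1 : cvg ((fun h : R => h^-1 * (phi (h + 1) - phi 1)) @ 0^'-))
  (phi_int : (inv_int phi 1 < +oo)%E)
  (phi_log : forall s : R, 0 < s < 1 -> (derive1 phi s) / phi s <= 2 / s) :
  forall (A1 N1 A2 N2 t : R),
    0 <= A1 <= 1 -> 0 <= N1 <= 1 -> 0 <= A2 <= 1 -> 0 <= N2 <= 1 ->
    0 <= t <= 1 ->
    Tfun phi (t * A1 + (1 - t) * A2) (t * N1 + (1 - t) * N2)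
      <= t * Tfun phi A1 N1 + (1 - t) * Tfun phi A2 N2.
Proof.
move=> A1 N1 A2 N2 t /andP[A1_ge0 _] N1_01 /andP[A2_ge0 _] N2_01 t01.
have shift_gt0 (A : R) : 0 <= A -> 0 < A + 1 by move=> ?; lra.
have ratio01 (A N : R) : 0 <= A -> 0 <= N <= 1 -> N / (A + 1) \in `[0, 1].
  move=> A0 /andP[N0 N_le1]; have A_gt0 := shift_gt0 A A0.
  by rewrite in_itv /= divr_ge0 ?(ltW A_gt0) //= ler_pdivrMr // mul1r; lra.
have A_ge0 : 0 <= t * A1 + (1 - t) * A2 by move: t01 => /andP[? ?]; nra.
rewrite !Tfun_perspective ?gt_eqF ?shift_gt0 //.
have -> : t * A1 + (1 - t) * A2 + 1 = t * (A1 + 1) + (1 - t) * (A2 + 1) by ring.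
exact: convex_on_perspective (mul_inv_intR_convex phi_pos phi_der phi_der1 phi_int phi_log)
  (shift_gt0 _ A1_ge0) (shift_gt0 _ A2_ge0) (ratio01 _ _ A1_ge0 N1_01)
  (ratio01 _ _ A2_ge0 N2_01) t01.
Qed.
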